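(* Let $G=(V,E)$ be a graph, $v\in V$, $S_v$ the partial star product of $v$, and suppose that the number $k$ of equivalence classes of $\mathfrak d_v^*$ that contain an edge of $E_v$ is $1$ or $2$. Let $\mathbb S_1,\dots,\mathbb S_k$ be the corresponding star factors. Then $S_v\simeq\Box_{i=1}^k\mathbb S_i$.
   Context: All graphs are finite, simple and undirected. For $G=(V,E)$ and $v\in V$, $E_v$ is the set of edges incident to $v$. For two distinct adjacent edges $e=(v,u)$, $f=(v,w)$, a square spanned by $e$ and $f$ is a $4$-cycle $v,u,x,w,v$ with $x\notin\{v,u,w\}$; it is chordless if neither $(u,w)$ nor $(v,x)$ is an edge. In a chordless square $v,u,x,w$, $(x,w)$ is opposite to $(v,u)$ and $(x,u)$ is opposite to $(v,w)$ (and vice versa). The relation $\delta(G)$ on $E$: $(e,f)\in\delta(G)$ iff (i) $e,f$ are distinct adjacent edges and it is not the case that $e$ and $f$ span exactly one square and that square is chordless; or (ii) $e,f$ are opposite edges of a chordless square; or (iii) $e=f$. Define $\mathfrak d_v=((E_v\times E)\cup(E\times E_v))\cap\delta(G)$ and $\mathfrak d_v^*$ the finest equivalence relation on $E$ containing $\mathfrak d_v$. Let $F_v\subseteq E\setminus E_v$ be the set of edges that are the edges not incident to $v$ of some chordless square spanned by two edges $e,e'\in E_v$ with $(e,e')\notin\mathfrak d_v^*$. The partial star product $S_v$ is the subgraph of $G$ with edge set $E_v\cup F_v$ and vertex set the endpoints of these edges. For an equivalence class $\varphi$ of $\mathfrak d_v^*$, $N_\varphi(v)=\{u:(v,u)\in\varphi\}$;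 the star factor of $\varphi$ is the graph with vertex set $N_\varphi(v)\cup\{v\}$ and edge set $\{(v,u):u\in N_\varphi(v)\}$. $\Box$ denotes the Cartesian graph product. *)

(* Simple graphs: a symmetric irreflexive relation g on a finType T.
   Edges are represented as 2-element sets {x, y} : {set T} with g x y. *)
From HB Require Import structures.
From mathcomp Require Import all_boot.
Set Implicit Arguments.
Unset Strict Implicit.
Unset Printing Implicit Defensive.

Record sgraph (A : finType) := SGraph { vset : {set A}; adj : rel A }.

Definition graph_iso (A B : finType) (G1 : sgraph A) (G2 : sgraph B) : Prop :=
  exists f : A -> B,
    [/\ {in vset G1 &, injective f},
        f @: vset G1 = vset G2 &
        {in vset G1 &, forall x y, adj G1 x y = adj G2 (f x) (f y)}].

Definition box_prod (A : finType) (k : nat) (G : 'I_k -> sgraph A)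
  : sgraph {ffun 'I_k -> A} :=
  @SGraph {ffun 'I_k -> A}
    [set p : {ffun 'I_k -> A} | [forall i, p i \in vset (G i)]]
    (fun p q => [exists i, adj (G i) (p i) (q i) &&
                           [forall j, (j != i) ==> (p j == q j)]]).

Section StarProduct.
Variables (T : finType) (g : rel T).

Definition isEdge (e : {set T}) : bool :=
  [exists x, [exists y, g x y && (e == [set x; y])]].

(* number of squares v,u,x,w spanned by (v,u) and (v,w): x ∉ {v,u,w}, u~x, x~w *)
Definition sq_pt (v u w x : T) : bool := g u x && g x w && (x != v) && (x != u) && (x != w).

Definition nsquares (v u w : T) : nat := #|[set x | sq_pt v u w x]|.

Definition one_chordless_square (v u w : T) : bool :=
  (nsquares v u w == 1) && ~~ g u w &&
  [forall x, sq_pt v u w x ==> ~~ g v x].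

Definition opposite (e f : {set T}) : bool :=
  [exists a, [exists b, [exists c, [exists d,
    [&& g a b, g b c, g c d, g d a, a != c, b != d, ~~ g a c, ~~ g b d,
        e == [set a; b] & f == [set c; d]]]]]].

Definition delta (e f : {set T}) : bool :=
  [|| [exists v, [exists u, [exists w,
         [&& g v u, g v w, u != w, e == [set v; u], f == [set v; w]
           & ~~ one_chordless_square v u w]]]],
      opposite e f
    | (e == f) && isEdge e].

Definition incident (v : T) (e : {set T}) : bool := isEdge e && (v \in e).

Definition dv (v : T) (e f : {set T}) : bool :=
  delta e f && (incident v e || incident v f).

Definition dvs (v : T) : rel {set T} :=
  connect (fun e f => dv v e f || dv v f e).

Definition dvs_class (v : T) (e : {set T}) : {set {set T}} :=
  [set f | isEdge f && dvs v e f].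

Definition classes_at (v : T) : {set {set {set T}}} :=
  [set dvs_class v e | e in [set e | incident v e]].

Definition Fv (v : T) (f : {set T}) : bool :=
  [exists u, [exists w, [exists x,
    [&& g v u, g v w, u != w, sq_pt v u w x, ~~ g u w, ~~ g v x,
        ~~ dvs v [set v; u] [set v; w]
      & (f == [set u; x]) || (f == [set x; w])]]]].

Definition Sv_edge (v : T) (f : {set T}) : bool := incident v f || Fv v f.

Definition Sv (v : T) : sgraph T :=
  @SGraph T [set y | [exists f, Sv_edge v f && (y \in f)]]
            (fun y z => Sv_edge v [set y; z]).

Definition Nphi (v : T) (phi : {set {set T}}) : {set T} :=
  [set u | [set v; u] \in phi].

Definition star_factor (v : T) (phi : {set {set T}}) : sgraph T :=
  @SGraph T (v |: Nphi v phi)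
    (fun y z => ((y == v) && (z \in Nphi v phi)) || ((z == v) && (y \in Nphi v phi))).

End StarProduct.

From mathcomp Require Import all_boot.
Set Implicit Arguments. Unset Strict Implicit. Unset Printing Implicit Defensive.

(* Let N_i be the neighbours u of v with (v,u) in the class phi_i; the N_i
   partition the neighbourhood of v.  If u ∈ N_i, w ∈ N_j with i ≠ j, the edges
   (v,u), (v,w) are not d_v^*-related, hence not delta-related, so they span
   exactly one square, and it is chordless; call its fourth vertex
   [corner u w].  The key fact [corner_private] says that no third neighbour
   of v is adjacent to [corner u w]: otherwise (w,v),(w,x) would span two
   squares and the resulting delta-steps would join the classes of u and w.

   For k = 1 there are no such squares, F_v is empty and S_v is the star at v,
   i.e. the single star factor.  For k = 2 the map (a,b) ↦ [grid a b] sending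
   (v,b) to b, (a,v) to a and (a,b) to [corner a b] is an isomorphism from the
   product of the two stars onto S_v; both cases conclude with the general
   criterion [iso_of_inv], building an isomorphism from its inverse. *)

Lemma set2_eqE (T : finType) (a b c d : T) :
  [set a; b] = [set c; d] -> (a = c /\ b = d) \/ (a = d /\ b = c).
Proof.
move=> E.
have Ha : a \in [set c; d] by rewrite -E set21.
have Hb : b \in [set c; d] by rewrite -E set22.
have Hc : c \in [set a; b] by rewrite E set21.
have Hd : d \in [set a; b] by rewrite E set22.
move: Ha Hb Hc Hd => /set2P[]-> /set2P[]-> /set2P[] Hc /set2P[] Hd; subst; auto.
Qed.

Lemma iso_of_inv (A B : finType) (G1 : sgraph A) (G2 : sgraph B) (h : B -> A) (b0 : B) :
  {in vset G2 &, injective h} -> h @: vset G2 = vset G1 ->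
  {in vset G2 &, forall p q, adj G2 p q = adj G1 (h p) (h q)} -> graph_iso G1 G2.
Proof.
move=> hinj him hadj.
pose f y := odflt b0 [pick p in vset G2 | h p == y].
have fP y : y \in vset G1 -> f y \in vset G2 /\ h (f y) = y.
  rewrite -him => /imsetP[p Hp ->]; rewrite /f.
  case: pickP => [q /andP[Hq /eqP E] | /(_ p)]; first by [].
  by rewrite Hp eqxx.
exists f; split.
- move=> x y Hx Hy E; have [_ <-] := fP x Hx; have [_ <-] := fP y Hy; by rewrite E.
- apply/setP=> p; apply/imsetP/idP => [[y Hy ->] | Hp]; first by case: (fP y Hy).
  have Hy : h p \in vset G1 by rewrite -him; apply/imsetP; exists p.
  exists (h p) => //; have [Hf Ef] := fP _ Hy; by apply: hinj.
- move=> x y Hx Hy; have [Hfx Ex] := fP x Hx; have [Hfy Ey] := fP y Hy.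
  by rewrite hadj // Ex Ey.
Qed.

Lemma ord2 (i : 'I_2) : i = ord0 \/ i = ord_max.
Proof. by case: i => [[|[|//]]] Hi; [left|right]; apply: val_inj. Qed.

Definition pair2 (A : finType) (a b : A) : {ffun 'I_2 -> A} :=
  [ffun i : 'I_2 => if i == ord0 then a else b].

Lemma pair2_0 (A : finType) (a b : A) : pair2 a b ord0 = a. Proof. by rewrite ffunE. Qed.
Lemma pair2_1 (A : finType) (a b : A) : pair2 a b ord_max = b. Proof. by rewrite ffunE. Qed.

Lemma pair2_eta (A : finType) (p : {ffun 'I_2 -> A}) : p = pair2 (p ord0) (p ord_max).
Proof. by apply/ffunP => i; rewrite ffunE; case: (ord2 i) => ->. Qed.

Lemma box2_vset (A : finType) (G : 'I_2 -> sgraph A) p :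
  (p \in vset (box_prod G)) = (p ord0 \in vset (G ord0)) && (p ord_max \in vset (G ord_max)).
Proof.
rewrite inE; apply/forallP/andP => [H|[H0 H1] i]; first by split; apply: H.
by case: (ord2 i) => ->.
Qed.

Lemma box2_adj (A : finType) (G : 'I_2 -> sgraph A) p q :
  adj (box_prod G) p q =
  (adj (G ord0) (p ord0) (q ord0) && (p ord_max == q ord_max)) ||
  (adj (G ord_max) (p ord_max) (q ord_max) && (p ord0 == q ord0)).
Proof.
rewrite /=; apply/existsP/orP => [[i /andP[Ha /forallP Hf]] | [/andP[Ha He] | /andP[Ha He]]].
- case: (ord2 i) => Ei; subst i; [left|right]; rewrite Ha /=.
    by apply: (implyP (Hf ord_max)).
  by apply: (implyP (Hf ord0)).
- exists ord0; rewrite Ha /=; apply/forallP => j; apply/implyP.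
  by case: (ord2 j) => ->; rewrite ?eqxx.
- exists ord_max; rewrite Ha /=; apply/forallP => j; apply/implyP.
  by case: (ord2 j) => ->; rewrite ?eqxx.
Qed.

Section EdgesAndSquares.
Variables (T : finType) (g : rel T) (gsym : symmetric g) (v : T).

Lemma isEdge2 y z : isEdge g [set y; z] = g y z.
Proof.
apply/idP/idP.
  case/existsP=> a /existsP[b /andP[gab /eqP E]].
  by case: (set2_eqE E) => -[-> ->] //; rewrite gsym.
by move=> gyz; apply/existsP; exists y; apply/existsP; exists z; rewrite gyz eqxx.
Qed.

Lemma isEdgeP e : isEdge g e -> exists a b, g a b /\ e = [set a; b].
Proof. by case/existsP=> a /existsP[b /andP[gab /eqP E]]; exists a, b. Qed.

Lemma incident2 y z : incident g v [set y; z] = g y z && ((y == v) || (z == v)).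
Proof. by rewrite /incident isEdge2 in_set2 ![v == _]eq_sym. Qed.

Lemma dvs_sym e f : dvs g v e f = dvs g v f e.
Proof. by apply: sym_connect_sym => x y; rewrite orbC. Qed.

Lemma dvs_trans e f h : dvs g v e f -> dvs g v f h -> dvs g v e h.
Proof. exact: connect_trans. Qed.

Lemma delta_dvs e f : delta g e f -> incident g v e || incident g v f -> dvs g v e f.
Proof. by move=> H1 H2; apply: connect1; rewrite /dv H1 H2. Qed.

Lemma sq_pt_sym u w x : sq_pt g v u w x = sq_pt g v w u x.
Proof.
rewrite /sq_pt; apply/idP/idP => /andP[/andP[/andP[/andP[a b] c] d] e];
  by rewrite (gsym x) (gsym _ x) a b c d e.
Qed.

Definition corner (u w : T) : T := odflt v [pick x | sq_pt g v u w x].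

Lemma cornerP u w : one_chordless_square g v u w ->
  [/\ sq_pt g v u w (corner u w), ~~ g v (corner u w), ~~ g u w &
      forall y, sq_pt g v u w y -> y = corner u w].
Proof.
case/andP=> /andP[n1 nuw] /forallP H.
case/cards1P: n1 => x Ex.
have Hx y : sq_pt g v u w y = (y == x) by rewrite -in_set1 -Ex inE.
have -> : corner u w = x.
  rewrite /corner; case: pickP => [y|]; first by rewrite Hx => /eqP.
  by move/(_ x); rewrite Hx eqxx.
split=> //; first by rewrite Hx.
  by have := H x; rewrite Hx eqxx.
by move=> y; rewrite Hx => /eqP.
Qed.

End EdgesAndSquares.

Section StarClasses.
Variables (T : finType) (g : rel T) (gsym : symmetric g) (girr : irreflexive g) (v : T).
Variables (k : nat) (phi : 'I_k -> {set {set T}}) (phi_inj : injective phi)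
  (phi_classes : forall C, C \in classes_at g v <-> exists i, phi i = C).

Lemma mem_phi e : incident g v e -> exists i, e \in phi i.
Proof.
move=> He.
have : dvs_class g v e \in classes_at g v by apply/imsetP; exists e; rewrite ?inE.
case/phi_classes=> i Ei; exists i; rewrite Ei inE /dvs connect0 andbT.
by case/andP: He.
Qed.

Lemma phi_rep i : exists2 e, incident g v e & phi i = dvs_class g v e.
Proof.
have : phi i \in classes_at g v by apply/phi_classes; exists i.
by case/imsetP=> e; rewrite inE => He ->; exists e.
Qed.

Lemma phi_dvs i j e f : e \in phi i -> f \in phi j -> dvs g v e f -> i = j.
Proof.
have [ei _ Ei] := phi_rep i; have [ej _ Ej] := phi_rep j.
rewrite Ei Ej !inE => /andP[_ H1] /andP[_ H2] H3.
apply: phi_inj; rewrite Ei Ej; apply/setP=> x; rewrite !inE.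
have Hij : dvs g v ei ej.
  by apply: dvs_trans (dvs_trans H1 H3) _; rewrite dvs_sym.
have Hji : dvs g v ej ei by rewrite dvs_sym.
case: (isEdge g x) => //=; apply/idP/idP => H; exact: dvs_trans H.
Qed.

Lemma phi_same i e f : e \in phi i -> f \in phi i -> dvs g v e f.
Proof.
have [ei _ ->] := phi_rep i; rewrite !inE => /andP[_ H1] /andP[_ H2].
by apply: dvs_trans H2; rewrite dvs_sym.
Qed.

Definition N i := Nphi v (phi i).

Lemma N_adj i u : u \in N i -> g v u.
Proof.
have [ei _ Ei] := phi_rep i.
by rewrite inE Ei inE => /andP[]; rewrite (isEdge2 gsym).
Qed.

Lemma N_cover u : g v u -> exists i, u \in N i.
Proof.
move=> gvu; have [|i Hi] := mem_phi (e:=[set v; u]).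
  by rewrite (incident2 gsym) gvu eqxx.
by exists i; rewrite inE.
Qed.

Lemma N_disjoint i j u : u \in N i -> u \in N j -> i = j.
Proof. rewrite !inE => H1 H2; exact: phi_dvs H1 H2 (connect0 _ _). Qed.

Lemma N_neq i j u w : u \in N i -> w \in N j -> i != j -> u != w.
Proof.
by move=> H1 H2 /eqP nij; apply/eqP=> E; subst; apply: nij; apply: N_disjoint H1 H2.
Qed.

Lemma N_not_dvs i j u w : u \in N i -> w \in N j -> i != j ->
  ~~ dvs g v [set v; u] [set v; w].
Proof.
rewrite !inE => H1 H2 /eqP nij; apply/negP => H; apply: nij; exact: phi_dvs H1 H2 H.
Qed.

Lemma N_one_chordless i j u w : u \in N i -> w \in N j -> i != j ->
  one_chordless_square g v u w.
Proof.
move=> H1 H2 nij; apply/negPn/negP => nocs.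
have := N_not_dvs H1 H2 nij.
rewrite delta_dvs //; last by rewrite (incident2 gsym) eqxx (N_adj H1).
apply/orP; left; apply/existsP; exists v; apply/existsP; exists u; apply/existsP; exists w.
by rewrite (N_adj H1) (N_adj H2) (N_neq H1 H2 nij) !eqxx nocs.
Qed.

(* A third one u' would give (w,v),(w,x) two squares, so (w,v) delta (w,x);
   with (x,w) opposite to (v,u) this would relate the classes of w and u. *)
Lemma corner_private i j u w u' : u \in N i -> w \in N j -> i != j ->
  u' != u -> u' != w -> g v u' -> ~~ g u' (corner g v u w).
Proof.
move=> H1 H2 nij n1 n2 gvu'; apply/negP => gux.
have [sq nvx nuw _] := cornerP (N_one_chordless H1 H2 nij).
set x := corner g v u w in sq nvx gux.
move: (sq); rewrite /sq_pt => /andP[/andP[/andP[/andP[gux0 gxw] xv] xu] xw].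
have gvu := N_adj H1; have gvw := N_adj H2.
have square_wvx y : g v y -> g y x -> y != w -> sq_pt g w v x y.
  move=> gvy gyx yw; rewrite /sq_pt gvy gyx yw /=.
  apply/andP; split; apply/eqP=> E; subst; first by rewrite girr in gvy.
  by rewrite gvy in nvx.
have two_squares : ~~ one_chordless_square g w v x.
  apply/negP=> /andP[/andP[c1 _] _]; case/cards1P: c1 => y Ey.
  have Hu : u \in [set y] by rewrite -Ey inE square_wvx // (N_neq H1 H2 nij).
  have Hu' : u' \in [set y] by rewrite -Ey inE square_wvx.
  by move: Hu Hu' n1; rewrite !inE => /eqP-> /eqP->; rewrite eqxx.
have wv_wx : dvs g v [set w; v] [set w; x].
  apply: delta_dvs; last by rewrite (incident2 gsym) gsym gvw eqxx orbT.
  apply/orP; left; apply/existsP; exists w; apply/existsP; exists v; apply/existsP; exists x.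
  by rewrite gsym gvw (gsym w) gxw !eqxx two_squares /= andbT eq_sym.
have xw_vu : dvs g v [set x; w] [set v; u].
  apply: delta_dvs; last by rewrite orbC (incident2 gsym) gvu eqxx.
  apply/orP; right; apply/orP; left; apply/existsP; exists x; apply/existsP; exists w;
    apply/existsP; exists v; apply/existsP; exists u.
  by rewrite gxw (gsym w v) gvw gvu gux0 xv (gsym x v) nvx (gsym w u) nuw !eqxx
     eq_sym (N_neq H1 H2 nij).
move: nij; rewrite eq_sym => /negP; apply; apply/eqP.
move: H2 H1; rewrite !inE setUC => H2 H1; apply: phi_dvs H2 H1 _.
by apply: dvs_trans wv_wx _; rewrite setUC.
Qed.

End StarClasses.

Section TwoClasses.
Variables (T : finType) (g : rel T) (gsym : symmetric g) (girr : irreflexive g) (v : T).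
Variables (phi : 'I_2 -> {set {set T}}) (phi_inj : injective phi)
  (phi_classes : forall C, C \in classes_at g v <-> exists i, phi i = C).

Let N1 := N v phi ord0.
Let N2 := N v phi ord_max.
Let X := corner g v.
Let n01 : (ord0 : 'I_2) != ord_max. Proof. by []. Qed.
Let n10 : (ord_max : 'I_2) != ord0. Proof. by []. Qed.

Lemma N1_adj u : u \in N1 -> g v u. Proof. exact: (N_adj gsym phi_classes (i:=ord0)). Qed.
Lemma N2_adj u : u \in N2 -> g v u. Proof. exact: (N_adj gsym phi_classes (i:=ord_max)). Qed.

Lemma adj_neq u : g v u -> u != v.
Proof. by move=> H; apply/eqP=> E; rewrite E girr in H. Qed.

Lemma N12 u : u \in N1 -> u \in N2 -> False.
Proof. by move=> H1 H2; have := N_disjoint phi_inj phi_classes H1 H2. Qed.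

Lemma N12_cover u : g v u -> u \in N1 \/ u \in N2.
Proof. by case/(N_cover gsym phi_classes) => i; case: (ord2 i) => ->; auto. Qed.

Lemma XP u w : u \in N1 -> w \in N2 ->
  [/\ sq_pt g v u w (X u w), ~~ g v (X u w), ~~ g u w &
      forall y, sq_pt g v u w y -> y = X u w].
Proof. by move=> H1 H2; apply: cornerP; apply: (N_one_chordless gsym phi_inj phi_classes H1 H2 n01). Qed.

Lemma X_neq_v u w : u \in N1 -> w \in N2 -> X u w != v.
Proof.
by move=> H1 H2; have [/andP[/andP[/andP[/andP[_ _] ?] _] _] _ _ _] := XP H1 H2.
Qed.

Lemma X_nadj_v u w : u \in N1 -> w \in N2 -> ~~ g v (X u w).
Proof. by move=> H1 H2; have [] := XP H1 H2. Qed.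

Lemma X_adj1 u w : u \in N1 -> w \in N2 -> g u (X u w).
Proof.
by move=> H1 H2; have [/andP[/andP[/andP[/andP[? _] _] _] _] _ _ _] := XP H1 H2.
Qed.

Lemma X_adj2 u w : u \in N1 -> w \in N2 -> g w (X u w).
Proof.
move=> H1 H2; have [/andP[/andP[/andP[/andP[_ ?] _] _] _] _ _ _] := XP H1 H2.
by rewrite gsym.
Qed.

Lemma X_sym u w : u \in N1 -> w \in N2 -> X w u = X u w.
Proof.
move=> H1 H2.
have [_ _ _ U] := cornerP (N_one_chordless gsym phi_inj phi_classes H2 H1 n10).
have [sq _ _ _] := XP H1 H2.
by symmetry; apply: U; rewrite -(sq_pt_sym gsym).
Qed.

Lemma X_inj u w u' w' : u \in N1 -> w \in N2 -> u' \in N1 -> w' \in N2 ->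
  X u w = X u' w' -> u = u' /\ w = w'.
Proof.
move=> H1 H2 H1' H2' E; split.
  apply/eqP; rewrite eq_sym; apply/negPn/negP => ne.
  have u'w : u' != w by apply/eqP=> E'; subst; apply: (N12 H1' H2).
  have := corner_private gsym girr phi_inj phi_classes H1 H2 n01 ne u'w (N1_adj H1').
  by rewrite -/X E X_adj1.
apply/eqP; rewrite eq_sym; apply/negPn/negP => ne.
have w'u : w' != u by apply/eqP=> E'; subst; apply: (N12 H1 H2').
have := corner_private gsym girr phi_inj phi_classes H2 H1 n10 ne w'u (N2_adj H2').
by rewrite -/X X_sym // E X_adj2.
Qed.

Lemma Fv_char f : Fv g v f -> exists u w, [/\ u \in N1, w \in N2 &
   f = [set u; X u w] \/ f = [set X u w; w]].
Proof.
case/existsP=> u /existsP[w /existsP[x /and5P[gvu gvw uw sq /and4P[nuw nvx nd Ef]]]].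
have [i Hi] := N_cover gsym phi_classes gvu; have [j Hj] := N_cover gsym phi_classes gvw.
have nij : i != j.
  apply/eqP=> E; subst; move/negP: nd; apply; rewrite !inE in Hi Hj.
  exact: (phi_same phi_classes Hi Hj).
case: (ord2 i) => Ei; subst i; case: (ord2 j) => Ej; subst j.
- by rewrite eqxx in nij.
- have [_ _ _ U] := XP Hi Hj.
  exists u, w; split=> //; rewrite -(U x sq).
  by case/orP: Ef => /eqP->; [left|right].
- have [_ _ _ U] := XP Hj Hi.
  exists w, u; split=> //; rewrite -(U x); last by rewrite (sq_pt_sym gsym).
  by case/orP: Ef => /eqP->; [right|left]; rewrite setUC.
- by rewrite eqxx in nij.
Qed.

Lemma Fv_intro u w : u \in N1 -> w \in N2 ->
  Fv g v [set u; X u w] /\ Fv g v [set X u w; w].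
Proof.
move=> H1 H2; have [sq nvx nuw _] := XP H1 H2.
have uw : u != w by apply/eqP=> E; subst; apply: (N12 H1 H2).
have nd := N_not_dvs phi_inj phi_classes H1 H2 n01.
split; apply/existsP; exists u; apply/existsP; exists w; apply/existsP; exists (X u w);
  by rewrite (N1_adj H1) (N2_adj H2) uw sq nuw nvx nd !eqxx ?orbT.
Qed.

Definition sv_adj y z := Sv_edge g v [set y; z].

Lemma sv_adj_sym y z : sv_adj y z = sv_adj z y.
Proof. by rewrite /sv_adj setUC. Qed.

Lemma Fv_pts y z : Fv g v [set y; z] -> exists u w, [/\ u \in N1, w \in N2 &
  [\/ y = u /\ z = X u w, y = X u w /\ z = u, y = X u w /\ z = w | y = w /\ z = X u w]].
Proof.
case/Fv_char=> u [w [H1 H2 E]]; exists u, w; split=> //.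
by case: E => /set2_eqE [] [-> ->]; [constructor 1|constructor 2|constructor 3|constructor 4].
Qed.

Lemma sv_adj_notv y z : y != v -> z != v -> sv_adj y z = Fv g v [set y; z].
Proof.
by move=> yv zv; rewrite /sv_adj /Sv_edge (incident2 gsym) (negbTE yv) (negbTE zv) andbF.
Qed.

Lemma sv_adj_vl z : sv_adj v z = g v z.
Proof.
rewrite /sv_adj /Sv_edge (incident2 gsym) eqxx andbT.
case: (g v z) => //=; apply/negbTE/negP => /Fv_pts [u [w [H1 H2 HH]]]; case: HH => -[E1 E2].
- by move: (N1_adj H1); rewrite -E1 girr.
- by move: (X_neq_v H1 H2); rewrite -E1 eqxx.
- by move: (X_neq_v H1 H2); rewrite -E1 eqxx.
- by move: (N2_adj H2); rewrite -E1 girr.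
Qed.

Lemma sv_adj_vr y : sv_adj y v = g v y.
Proof. by rewrite sv_adj_sym sv_adj_vl. Qed.

Lemma sv_adj_NN y z : g v y -> g v z -> sv_adj y z = false.
Proof.
move=> gy gz; rewrite sv_adj_notv ?adj_neq //.
apply/negbTE/negP => /Fv_pts [u [w [H1 H2 HH]]]; case: HH => -[E1 E2].
- by move: gz; rewrite E2 (negbTE (X_nadj_v H1 H2)).
- by move: gy; rewrite E1 (negbTE (X_nadj_v H1 H2)).
- by move: gy; rewrite E1 (negbTE (X_nadj_v H1 H2)).
- by move: gz; rewrite E2 (negbTE (X_nadj_v H1 H2)).
Qed.

Lemma sv_adj_XX a b c d : a \in N1 -> b \in N2 -> c \in N1 -> d \in N2 ->
  sv_adj (X a b) (X c d) = false.
Proof.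
move=> Ha Hb Hc Hd; rewrite sv_adj_notv ?X_neq_v //.
apply/negbTE/negP => /Fv_pts [u [w [H1 H2 HH]]]; case: HH => -[E1 E2].
- by move: (N1_adj H1); rewrite -E1 (negbTE (X_nadj_v Ha Hb)).
- by move: (N1_adj H1); rewrite -E2 (negbTE (X_nadj_v Hc Hd)).
- by move: (N2_adj H2); rewrite -E2 (negbTE (X_nadj_v Hc Hd)).
- by move: (N2_adj H2); rewrite -E1 (negbTE (X_nadj_v Ha Hb)).
Qed.

Lemma sv_adj_NX1 y c d : y \in N1 -> c \in N1 -> d \in N2 -> sv_adj y (X c d) = (y == c).
Proof.
move=> Hy Hc Hd; rewrite sv_adj_notv ?X_neq_v ?adj_neq ?N1_adj //.
apply/idP/eqP => [|->]; last by case: (Fv_intro Hc Hd).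
case/Fv_pts => [u [w [H1 H2 HH]]]; case: HH => -[E1 E2].
- by subst y; have [] := X_inj Hc Hd H1 H2 E2.
- by move: (N1_adj Hy); rewrite E1 (negbTE (X_nadj_v H1 H2)).
- by move: (N1_adj Hy); rewrite E1 (negbTE (X_nadj_v H1 H2)).
- by subst y; case: (N12 Hy H2).
Qed.

Lemma sv_adj_NX2 y c d : y \in N2 -> c \in N1 -> d \in N2 -> sv_adj y (X c d) = (y == d).
Proof.
move=> Hy Hc Hd; rewrite sv_adj_notv ?X_neq_v ?adj_neq ?N2_adj //.
apply/idP/eqP => [|->]; last by rewrite setUC; case: (Fv_intro Hc Hd).
case/Fv_pts => [u [w [H1 H2 HH]]]; case: HH => -[E1 E2].
- by subst y; case: (N12 H1 Hy).
- by move: (N2_adj Hy); rewrite E1 (negbTE (X_nadj_v H1 H2)).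
- by move: (N2_adj Hy); rewrite E1 (negbTE (X_nadj_v H1 H2)).
- by subst y; have [] := X_inj Hc Hd H1 H2 E2.
Qed.

Lemma sv_adj_XN1 y c d : y \in N1 -> c \in N1 -> d \in N2 -> sv_adj (X c d) y = (y == c).
Proof. by move=> *; rewrite sv_adj_sym sv_adj_NX1. Qed.
Lemma sv_adj_XN2 y c d : y \in N2 -> c \in N1 -> d \in N2 -> sv_adj (X c d) y = (y == d).
Proof. by move=> *; rewrite sv_adj_sym sv_adj_NX2. Qed.

Lemma N1_neq_v u : u \in N1 -> (u == v) = false. Proof. by move/N1_adj/adj_neq/negbTE. Qed.
Lemma N2_neq_v u : u \in N2 -> (u == v) = false. Proof. by move/N2_adj/adj_neq/negbTE. Qed.
Lemma v_notin_N1 : (v \in N1) = false. Proof. by apply/negP => /N1_adj; rewrite girr. Qed.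
Lemma v_notin_N2 : (v \in N2) = false. Proof. by apply/negP => /N2_adj; rewrite girr. Qed.

Definition grid a b := if a == v then b else if b == v then a else X a b.
Lemma grid_v b : grid v b = b. Proof. by rewrite /grid eqxx. Qed.
Lemma grid_a a : a \in N1 -> grid a v = a. Proof. by move=> Ha; rewrite /grid N1_neq_v // eqxx. Qed.
Lemma grid_ab a b : a \in N1 -> b \in N2 -> grid a b = X a b.
Proof. by move=> Ha Hb; rewrite /grid N1_neq_v // N2_neq_v. Qed.

(* [grid] preserves adjacency: the right-hand side is adjacency in the product
   of the two stars. *)
Lemma grid_adj a b c d : a \in v |: N1 -> b \in v |: N2 -> c \in v |: N1 -> d \in v |: N2 ->
  sv_adj (grid a b) (grid c d) =
  (((a == v) && (c \in N1)) || ((c == v) && (a \in N1))) && (b == d) ||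
  (((b == v) && (d \in N2)) || ((d == v) && (b \in N2))) && (a == c).
Proof.
case/setU1P=> [->|Ha]; case/setU1P=> [->|Hb]; case/setU1P=> [->|Hc]; case/setU1P=> [->|Hd].
all: rewrite ?grid_v ?grid_a ?grid_ab // ?sv_adj_vl ?sv_adj_vr ?girr ?eqxx ?v_notin_N1 ?v_notin_N2 /=.
all: rewrite ?(eq_sym v).
all: try rewrite (N1_neq_v Ha); try rewrite (N2_neq_v Hb);
     try rewrite (N1_neq_v Hc); try rewrite (N2_neq_v Hd).
all: try rewrite Ha; try rewrite Hb; try rewrite Hc; try rewrite Hd; rewrite /= ?andbT ?orbF.
all: try rewrite (N1_adj Ha); try rewrite (N2_adj Hb);
     try rewrite (N1_adj Hc); try rewrite (N2_adj Hd).
all: try done.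
all: try by rewrite (negbTE (X_nadj_v Hc Hd)).
all: try by rewrite (negbTE (X_nadj_v Ha Hb)).
all: try by apply: sv_adj_NN; solve [apply: N1_adj; assumption | apply: N2_adj; assumption].
all: try by rewrite sv_adj_NX2.
all: try by rewrite sv_adj_NX1.
all: try by rewrite sv_adj_XN2.
all: try by rewrite sv_adj_XN1.
all: by rewrite sv_adj_XX.
Qed.

Lemma grid_inj a b c d : a \in v |: N1 -> b \in v |: N2 -> c \in v |: N1 -> d \in v |: N2 ->
  grid a b = grid c d -> a = c /\ b = d.
Proof.
case/setU1P=> [->|Ha]; case/setU1P=> [->|Hb]; case/setU1P=> [->|Hc]; case/setU1P=> [->|Hd].
all: rewrite ?grid_v ?grid_a ?grid_ab // => E.
- by move: (X_neq_v Hc Hd); rewrite -E eqxx.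
- by subst; case: (N12 Hc Hb).
- by move: (X_nadj_v Hc Hd); rewrite -E (N2_adj Hb).
- by subst; case: (N12 Ha Hd).
- by move: (X_nadj_v Hc Hd); rewrite -E (N1_adj Ha).
- by move: (X_neq_v Ha Hb); rewrite E eqxx.
- by move: (X_nadj_v Ha Hb); rewrite E (N2_adj Hd).
- by move: (X_nadj_v Ha Hb); rewrite E (N1_adj Hc).
- exact: X_inj.
Qed.

Lemma Sv_edge2 f : Sv_edge g v f -> exists a b, f = [set a; b].
Proof.
case/orP => [/andP[/isEdgeP [a [b [_ ->]]] _] | /Fv_char [u [w [_ _ [->|->]]]]].
- by exists a, b.
- by exists u, (X u w).
- by exists (X u w), w.
Qed.

Lemma Sv_vsetE y : (y \in vset (Sv g v)) = [exists z, sv_adj y z].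
Proof.
rewrite inE; apply/existsP/existsP => [[f /andP[Hf yf]] | [z Hz]].
  have [a [b Ef]] := Sv_edge2 Hf; subst f.
  case/set2P: yf => ->; first by exists b.
  by exists a; rewrite /sv_adj setUC.
by exists [set y; z]; rewrite set21 andbT.
Qed.

Lemma v_in_Sv : v \in vset (Sv g v).
Proof.
have [e He _] := phi_rep phi_classes ord0.
case/andP: He => /isEdgeP[a [b [gab ->]]] /set2P [] E; rewrite -E in gab.
  by rewrite Sv_vsetE; apply/existsP; exists b; rewrite sv_adj_vl.
by rewrite Sv_vsetE; apply/existsP; exists a; rewrite sv_adj_vl gsym.
Qed.

Lemma adj_in_Sv y : g v y -> y \in vset (Sv g v).
Proof. by move=> gy; rewrite Sv_vsetE; apply/existsP; exists v; rewrite sv_adj_vr. Qed.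

Lemma X_in_Sv u w : u \in N1 -> w \in N2 -> X u w \in vset (Sv g v).
Proof. by move=> H1 H2; rewrite Sv_vsetE; apply/existsP; exists u; rewrite sv_adj_XN1. Qed.

Lemma Sv_vset_cases y : y \in vset (Sv g v) ->
  [\/ y = v, g v y | exists u w, [/\ u \in N1, w \in N2 & y = X u w]].
Proof.
rewrite Sv_vsetE => /existsP[z Hz].
case: (eqVneq y v) => [->|yv]; first by constructor 1.
case gvy: (g v y); first by constructor 2.
move: Hz; rewrite /sv_adj /Sv_edge (incident2 gsym) (negbTE yv) /=.
case/orP => [/andP[gyz /eqP E] | /Fv_pts [u [w [H1 H2 HH]]]].
  by subst z; rewrite gsym gvy in gyz.
case: HH => -[E1 E2]; subst y.
- by rewrite (N1_adj H1) in gvy.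
- by constructor 3; exists u, w.
- by constructor 3; exists u, w.
- by rewrite (N2_adj H2) in gvy.
Qed.

Lemma grid_onto : (fun p : {ffun 'I_2 -> T} => grid (p ord0) (p ord_max))
    @: vset (box_prod (fun i => star_factor v (phi i))) = vset (Sv g v).
Proof.
apply/setP => y; apply/imsetP/idP.
  case=> p; rewrite box2_vset => /andP[Hp0 Hp1] ->.
  case/setU1P: Hp0 => [E0|H0]; case/setU1P: Hp1 => [E1|H1];
    rewrite ?E0 ?E1 ?grid_v ?grid_a ?grid_ab //.
  + exact: v_in_Sv.
  + exact: adj_in_Sv (N2_adj H1).
  + exact: adj_in_Sv (N1_adj H0).
  + exact: X_in_Sv.
case/Sv_vset_cases => [->| gy | [u [w [H1 H2 ->]]]].
+ exists (pair2 v v); last by rewrite pair2_0 pair2_1 grid_v.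
  by rewrite box2_vset pair2_0 pair2_1 !setU11.
+ case: (N12_cover gy) => Hy.
    exists (pair2 y v); last by rewrite pair2_0 pair2_1 grid_a.
    by rewrite box2_vset pair2_0 pair2_1 setU11 andbT; apply/setU1P; right.
  exists (pair2 v y); last by rewrite pair2_0 pair2_1 grid_v.
  by rewrite box2_vset pair2_0 pair2_1 setU11 /=; apply/setU1P; right.
+ exists (pair2 u w); last by rewrite pair2_0 pair2_1 grid_ab.
  by rewrite box2_vset pair2_0 pair2_1; apply/andP; split; apply/setU1P; right.
Qed.

Lemma Sv_iso_two : graph_iso (Sv g v) (box_prod (fun i => star_factor v (phi i))).
Proof.
apply: (@iso_of_inv _ _ _ (box_prod _) (fun p => grid (p ord0) (p ord_max)) (pair2 v v)).
- move=> p q; rewrite !box2_vset => /andP[Hp0 Hp1] /andP[Hq0 Hq1] E.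
  have [E0 E1] := grid_inj Hp0 Hp1 Hq0 Hq1 E.
  by rewrite (pair2_eta p) (pair2_eta q) E0 E1.
- exact: grid_onto.
- move=> p q; rewrite !box2_vset => /andP[Hp0 Hp1] /andP[Hq0 Hq1].
  by rewrite box2_adj /=; have := grid_adj Hp0 Hp1 Hq0 Hq1; rewrite /sv_adj => ->.
Qed.

End TwoClasses.

Section OneClass.
Variables (T : finType) (g : rel T) (gsym : symmetric g) (v : T).
Variables (phi : 'I_1 -> {set {set T}})
  (phi_classes : forall C, C \in classes_at g v <-> exists i, phi i = C).

Let N0 := N v phi ord0.

Lemma N0E u : (u \in N0) = g v u.
Proof.
apply/idP/idP; first exact: (N_adj gsym phi_classes (i:=ord0)).
by case/(N_cover gsym phi_classes) => i; rewrite (ord1 i).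
Qed.

(* All edges at v are d_v^*-related, so no pair of them contributes to F_v. *)
Lemma Fv_one f : Fv g v f = false.
Proof.
apply/negbTE/negP.
case/existsP=> u /existsP[w /existsP[x /and5P[gvu gvw uw sq /and4P[nuw nvx nd Ef]]]].
move/negP: nd; apply.
have Hu : [set v; u] \in phi ord0 by rewrite -(N0E u) inE in gvu.
have Hw : [set v; w] \in phi ord0 by rewrite -(N0E w) inE in gvw.
exact: (phi_same phi_classes Hu Hw).
Qed.

Lemma Sv_edge_one y z : Sv_edge g v [set y; z] = g y z && ((y == v) || (z == v)).
Proof. by rewrite /Sv_edge Fv_one orbF (incident2 gsym). Qed.

Lemma Sv_vset_one y : (y \in vset (Sv g v)) = (y == v) || g v y.
Proof.
rewrite inE; apply/existsP/idP => [[f /andP[Hf yf]] | H].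
  move: Hf; rewrite /Sv_edge Fv_one orbF => /andP[He vf].
  have [a [b [gab Ef]]] := isEdgeP He; rewrite Ef in vf yf.
  case/set2P: vf => Ev; case/set2P: yf => ->; rewrite -?Ev ?eqxx //.
  - by rewrite Ev gab orbT.
  - by rewrite Ev gsym gab orbT.
case/orP: H => [/eqP ->|gy].
  have [e He _] := phi_rep phi_classes ord0.
  by exists e; rewrite /Sv_edge He; case/andP: He.
by exists [set v; y]; rewrite /Sv_edge (incident2 gsym) gy eqxx set22.
Qed.

Lemma Sv_iso_one : graph_iso (Sv g v) (box_prod (fun i => star_factor v (phi i))).
Proof.
apply: (@iso_of_inv _ _ _ (box_prod _) (fun p => p ord0) [ffun _ => v]).
- move=> p q _ _ E; apply/ffunP => i; by rewrite (ord1 i).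
- apply/setP => y; apply/imsetP/idP.
    case=> p; rewrite inE => /forallP /(_ ord0) /= /setU1P H ->.
    by rewrite Sv_vset_one; case: H => [->|]; rewrite ?eqxx // -/N0 N0E orbC => ->.
  rewrite Sv_vset_one => H; exists [ffun _ => y]; last by rewrite ffunE.
  rewrite inE; apply/forallP => i; rewrite ffunE /= (ord1 i); apply/setU1P.
  by case/orP: H => [/eqP|]; [left | right; rewrite -/N0 N0E].
- move=> p q _ _; rewrite /= Sv_edge_one.
  apply/existsP/idP => [[i /andP[Ha _]] | H].
    move: Ha; rewrite (ord1 i) -/N0 !N0E.
    by case/orP => /andP[/eqP -> H]; rewrite ?eqxx ?orbT ?andbT // gsym.
  exists ord0; apply/andP; split; last by apply/forallP => j; rewrite (ord1 j) eqxx.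
  rewrite -/N0 !N0E; case/andP: H => gpq /orP [] /eqP E.
    by rewrite -E eqxx gpq.
  by rewrite -E eqxx (gsym (q ord0) (p ord0)) gpq orbT.
Qed.

End OneClass.

Theorem corollary3p8 (T : finType) (g : rel T)
    (gsym : symmetric g) (girr : irreflexive g) (v : T)
    (k : nat) (phi : 'I_k -> {set {set T}}) :
  (k = 1 \/ k = 2) ->
  injective phi ->
  (forall C, C \in classes_at g v <-> exists i, phi i = C) ->
  graph_iso (Sv g v) (box_prod (fun i => star_factor v (phi i))).
Proof.
case=> Hk; subst k => phi_inj phi_classes.
  exact: Sv_iso_one.
exact: Sv_iso_two.
Qed.
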